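(* Let $H=(V,E)$ be a $k$-uniform hypergraph such that every strongly connected component of $H$ contains a copy of $K_{k+1}^k$ (i.e. a set of $k+1$ vertices all of whose $k$-subsets are hyperedges). Then $\operatorname{rank}\mathcal A_d(H)=|V|$ for all $d\geq k$.
   Context: A $k$-uniform hypergraph $H=(V,E)$ has finite vertex set $V$ and hyperedges $E$, $k$-subsets of $V$. $H$ is strongly connected if for any two distinct $\Delta,\Delta'\in E$ there are hyperedges $\Delta=\Delta_1,\Delta_2,\dots,\Delta_m=\Delta'$ with $|\Delta_i\cap\Delta_{i+1}|=k-1$ for all $i$; strongly connected components are the maximal strongly connected sub-hypergraphs (their hyperedge sets partition $E$). For $p:V\to\mathbb R^d$ with $p(\Delta)$ in general position for every $\Delta\in E$, let $p_\Delta$ be the orthogonal projection of the origin onto the affine span of $p(\Delta)$, written uniquely as $p_\Delta=\sum_{x\in\Delta}\alpha_x p(x)$ with $\sum_{x\in\Delta}\alpha_x=1$; $A(H,p)$ is the $|E|\times|V|$ matrix with entry $\alpha_x$ in row $\Delta$, column $x$ if $x\in\Delta$ and $0$ otherwise. $\mathcal A_d(H)$ is the row matroid of $A(H,p)$ for generic $p:V\to\mathbb R^d$ (coordinates algebraically independent over $\mathbb Q$). *)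

From HB Require Import structures.
From mathcomp Require Import all_boot all_order all_algebra.
From mathcomp Require Import reals.
From mathcomp Require Import mpoly.
Set Implicit Arguments. Unset Strict Implicit. Unset Printing Implicit Defensive.
Import Order.TTheory GRing.Theory Num.Theory.
Local Open Scope ring_scope.

Definition alg_indep_Q (R : realType) (I : finType) (x : I -> R) : Prop :=
  forall q : {mpoly rat[#|I|]}, q != 0 ->
    mmap (fun c : rat => ratr c) (fun i : 'I_#|I| => x (enum_val i)) q != 0.

Definition generic (R : realType) (V : finType) (d : nat) (p : V -> 'rV[R]_d) :=
  alg_indep_Q (fun xi : V * 'I_d => p xi.1 0 xi.2).

Definition dotp (R : realType) (d : nat) (u v : 'rV[R]_d) : R :=
  \sum_(i < d) u 0 i * v 0 i.

Definition k_uniform (V : finType) (k : nat) (E : {set {set V}}) : Prop :=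
  forall D, D \in E -> #|D| = k.

Definition hadj (V : finType) (k : nat) (E : {set {set V}}) : rel {set V} :=
  fun A B => [&& A \in E, B \in E & #|A :&: B| == k.-1].

Definition strongly_conn (V : finType) (k : nat) (E : {set {set V}}) (A B : {set V}) :=
  connect (hadj k E) A B.

Definition every_scc_has_clique (V : finType) (k : nat) (E : {set {set V}}) : Prop :=
  forall D, D \in E -> exists S : {set V},
    #|S| = k.+1 /\
    (forall T : {set V}, T \subset S -> #|T| = k -> T \in E /\ strongly_conn k E D T).

Definition gen_pos (R : realType) (V : finType) (d : nat) (p : V -> 'rV[R]_d) (D : {set V}) :=
  forall c : V -> R, \sum_(x in D) c x = 0 -> \sum_(x in D) c x *: p x = 0 ->
    forall x, x \in D -> c x = 0.

(* alpha D is the coefficient vector of the orthogonal projection p_D of the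
   origin onto the affine span of p(D): supported on D, affine (sum 1), and
   p_D = sum alpha_x p(x) is orthogonal to the direction space of the span. *)
Definition is_proj_coeffs (R : realType) (V : finType) (d : nat) (p : V -> 'rV[R]_d)
    (D : {set V}) (a : V -> R) : Prop :=
  [/\ forall x, x \notin D -> a x = 0,
      \sum_(x in D) a x = 1 &
      forall y z, y \in D -> z \in D ->
        dotp (\sum_(x in D) a x *: p x) (p y - p z) = 0].

Definition hmatrix (R : realType) (V : finType) (E : {set {set V}})
    (alpha : {set V} -> V -> R) : 'M[R]_(#|E|, #|V|) :=
  \matrix_(i < #|E|, j < #|V|) alpha (enum_val i) (enum_val j).

From HB Require Import structures.
From mathcomp Require Import all_boot all_order all_algebra.
From mathcomp Require Import reals mpoly.
From Stdlib Require Import FunctionalExtensionality.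
From mathcomp Require Import ring.
Set Implicit Arguments. Unset Strict Implicit. Unset Printing Implicit Defensive.
Import Order.TTheory GRing.Theory Num.Theory.
Local Open Scope ring_scope.

(* A vector w with w *m A(H,p)^T = 0 satisfies, for every hyperedge D, the
   equation sum_(x in D) alpha_D(x) w(x) = 0.  By Cramer's rule applied to the
   linear system defining alpha_D, det(L_D) alpha_D(x) is a polynomial in the
   coordinates of p; it is nonzero when p(D) is a standard basis, hence for
   generic p, so alpha_D(x) <> 0 for all x in D.  For a copy S of K_{k+1}^k,
   the k+1 equations of the facets of S form a square system whose determinant
   is again such a polynomial, nonzero at the configuration
   e_1, ..., e_k, -(e_1 + ... + e_k); hence w vanishes on S.  Two hyperedges
   sharing k-1 vertices differ in one vertex, whose coefficient is nonzero, so
   vanishing propagates along strong connectivity to every hyperedge. *)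

Section Configurations.
Variables (V : finType) (d : nat).
Local Notation I := (V * 'I_d)%type.

Lemma enum_set_ord (B : {set V}) (u : V) n :
  #|B| = n.+1 -> u \in B ->
  let ys := fun r : 'I_n.+1 => nth u (enum B) r in
  [/\ injective ys, forall r, ys r \in B, exists j, ys j = u &
      forall (R : realType) (F : V -> R), \sum_(v in B) F v = \sum_r F (ys r)].
Proof.
move=> HB Hu ys; have Hsz : size (enum B) = n.+1 by rewrite -cardE.
split.
- move=> a b /eqP; rewrite /ys nth_uniq ?Hsz ?enum_uniq // => /eqP; exact: val_inj.
- by move=> r; rewrite /ys -mem_enum mem_nth ?Hsz.
- have Hi : (index u (enum B) < n.+1)%N by rewrite -Hsz index_mem mem_enum.
  by exists (Ordinal Hi); rewrite /ys nth_index ?mem_enum.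
- by move=> R F; rewrite -big_enum (big_nth u) Hsz big_mkord.
Qed.

Lemma sum_imset_ord (R : realType) m (ys : 'I_m -> V) : injective ys ->
  forall F : V -> R, \sum_(v in ys @: setT) F v = \sum_r F (ys r).
Proof.
move=> inj F; rewrite big_imset /=; last by move=> a b _ _; apply: inj.
by apply: eq_bigl => i; rewrite in_setT.
Qed.

Definition point (Rg : nzRingType) (x : I -> Rg) (v : V) : 'rV[Rg]_d :=
  \row_i x (v, i).

Definition coords (R : nzRingType) (p : V -> 'rV[R]_d) : I -> R :=
  fun xi => p xi.1 0 xi.2.

Lemma point_coords (R : nzRingType) (p : V -> 'rV[R]_d) v : point (coords p) v = p v.
Proof. by apply/rowP => i; rewrite mxE. Qed.

Definition gdotp (Rg : nzRingType) (u w : 'rV[Rg]_d) : Rg := \sum_(i < d) u 0 i * w 0 i.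

Lemma gdotpC (Rg : comNzRingType) (u v : 'rV[Rg]_d) : gdotp u v = gdotp v u.
Proof. by apply: eq_bigr => i _; rewrite mulrC. Qed.

Lemma gdotpr0 (Rg : nzRingType) (u : 'rV[Rg]_d) : gdotp u 0 = 0.
Proof. by rewrite /gdotp big1 // => i _; rewrite mxE mulr0. Qed.

Lemma gdotpB (Rg : nzRingType) (u v w : 'rV[Rg]_d) :
  gdotp u (v - w) = gdotp u v - gdotp u w.
Proof. by rewrite /gdotp -sumrB; apply: eq_bigr => i _; rewrite !mxE mulrBr. Qed.

Lemma gdotp_suml (Rg : comNzRingType) (J : Type) (r : seq J) (P : pred J)
    (a : J -> Rg) (u : J -> 'rV[Rg]_d) w :
  gdotp (\sum_(j <- r | P j) a j *: u j) w = \sum_(j <- r | P j) a j * gdotp (u j) w.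
Proof.
rewrite /gdotp; under eq_bigr => i _ do rewrite summxE big_distrl /=.
rewrite exchange_big /=; apply: eq_bigr => j _; rewrite big_distrr /=.
by apply: eq_bigr => i _; rewrite !mxE mulrA.
Qed.

(* Row 0 says that the coefficients sum to 1, row r > 0 that the affine
   combination of the points ys is orthogonal to ys r - ys 0. *)
Definition proj_mx (Rg : nzRingType) (x : I -> Rg) m (ys : 'I_m.+1 -> V) : 'M[Rg]_m.+1 :=
  \matrix_(r, c) if r == ord0 then 1
                 else gdotp (point x (ys c)) (point x (ys r) - point x (ys ord0)).

Definition proj_cof (Rg : comNzRingType) (x : I -> Rg) m (ys : 'I_m.+1 -> V) j : Rg :=
  \adj (proj_mx x ys) j ord0.

Lemma map_proj_mx (R1 R2 : nzRingType) (f : {rmorphism R1 -> R2}) x m (ys : 'I_m.+1 -> V) :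
  map_mx f (proj_mx x ys) = proj_mx (f \o x) ys.
Proof.
apply/matrixP => r c; rewrite !mxE; case: (r == ord0); first by rewrite rmorph1.
rewrite /gdotp rmorph_sum; apply: eq_bigr => i _.
by rewrite rmorphM !mxE rmorphB.
Qed.

Lemma map_proj_cof (R1 R2 : comNzRingType) (f : {rmorphism R1 -> R2}) x m
    (ys : 'I_m.+1 -> V) j :
  f (proj_cof x ys j) = proj_cof (f \o x) ys j.
Proof. by rewrite /proj_cof -map_proj_mx -map_mx_adj !mxE. Qed.

(* [F] is a polynomial expression in the coordinates, uniformly in the ring;
   evaluating it at the indeterminates gives a polynomial that is nonzero
   because one of its rational values is. *)
Lemma alg_indep_neq0 (R : realType) (x : I -> R)
    (F : forall Rg : comNzRingType, (I -> Rg) -> Rg) (c : I -> rat) :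
  (forall (R1 R2 : comNzRingType) (f : {rmorphism R1 -> R2}) y, f (F R1 y) = F R2 (f \o y)) ->
  alg_indep_Q x -> F R (fun i => ratr (c i)) != 0 -> F R x != 0.
Proof.
move=> HF Hx Hc.
pose g := F {mpoly rat[#|{: I}|]} (fun i => 'X_(enum_rank i)).
have ev h : mmap ratr (fun j => h (enum_val j)) g = F R h.
  rewrite /g HF; congr (F R _); apply: functional_extensionality => i /=.
  by rewrite mmapX mmap1U enum_rankK.
have gnz : g != 0 by apply: contraNneq Hc => g0; rewrite -ev g0 mmap0.
by have := Hx g gnz; rewrite ev.
Qed.

Lemma det_mul_sol_adj (Rg : comNzRingType) m (L : 'M[Rg]_m.+1) (a : 'cV_m.+1) :
  L *m a = \col_r (r == ord0)%:R -> forall j, \det L * a j 0 = \adj L j ord0.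
Proof.
move=> H j; have := congr1 (mulmx (\adj L)) H; rewrite mulmxA mul_adj_mx mul_scalar_mx.
move/matrixP => /(_ j 0); rewrite !mxE => ->.
rewrite (bigD1 ord0) //= big1 ?addr0 => [|r /negbTE Hr]; rewrite !mxE ?Hr ?eqxx ?mulr1 //.
by rewrite mulr0.
Qed.

Lemma det_neq0_ker0 (F : fieldType) n (A : 'M[F]_n) :
  (forall w : 'cV_n, A *m w = 0 -> w = 0) -> \det A != 0.
Proof.
move=> H; rewrite -det_tr; apply/negP => /det0P [v vn0 vA].
have /eqP : v^T = 0 by apply: H; rewrite -[A]trmxK -trmx_mul vA trmx0.
by rewrite trmx_eq0 (negbTE vn0).
Qed.

Lemma proj_coeffs_sol (R : realType) (p : V -> 'rV[R]_d) (D : {set V}) (a : V -> R)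
    m (ys : 'I_m.+1 -> V) :
  is_proj_coeffs p D a -> (forall r, ys r \in D) ->
  (forall F : V -> R, \sum_(v in D) F v = \sum_r F (ys r)) ->
  proj_mx (coords p) ys *m (\col_c a (ys c)) = \col_r (r == ord0)%:R.
Proof.
case=> _ Hs Ho Hm Hsum; apply/matrixP => r j; rewrite !mxE.
under eq_bigr => c _ do rewrite !mxE.
case: (r == ord0).
  by under eq_bigr => c _ do rewrite mul1r; rewrite -Hs Hsum.
apply: etrans (Ho (ys r) (ys ord0) (Hm _) (Hm _)); rewrite [dotp _ _]gdotp_suml Hsum.
by apply: eq_bigr => c _; rewrite !point_coords mulrC.
Qed.

Lemma sum_delta (Rg : nzRingType) n (r : 'I_n) (F : 'I_n -> Rg) :
  \sum_c (c == r)%:R * F c = F r.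
Proof.
rewrite (bigD1 r) // big1 => [|c /negbTE ->]; first by rewrite /= eqxx mul1r addr0.
by rewrite mul0r.
Qed.

Definition erow (Rg : nzRingType) (a : nat) : 'rV[Rg]_d := \row_i ((i : nat) == a)%:R.

Lemma gdotp_erow (Rg : nzRingType) (a b : nat) :
  (a < d)%N -> gdotp (erow Rg a) (erow Rg b) = (a == b)%:R.
Proof.
move=> ad; rewrite /gdotp (bigD1 (Ordinal ad)) //= big1 => [|i Hi].
  by rewrite !mxE /= eqxx mul1r addr0.
rewrite !mxE; have -> : ((i : nat) == a) = false.
  by apply/negbTE; apply: contra Hi => /eqP Hia; apply/eqP/val_inj.
by rewrite mul0r.
Qed.

Section BasisConfiguration.
Variables (m : nat) (ys : 'I_m.+1 -> V).
Hypothesis md : (m.+1 <= d)%N.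

Lemma proj_mx_erow (Rg : nzRingType) (x : I -> Rg) :
  (forall r, point x (ys r) = erow Rg r) ->
  forall r c, proj_mx x ys r c = if r == ord0 then 1 else (c == r)%:R - (c == ord0)%:R.
Proof.
move=> Hpt r c; rewrite mxE; case: (r == ord0) => //.
by rewrite !Hpt gdotpB !gdotp_erow //; apply: leq_trans (ltn_ord c) md.
Qed.

Lemma proj_mx_erow_ker0 (R : realType) (x : I -> R) :
  (forall r, point x (ys r) = erow R r) ->
  forall w : 'cV_m.+1, proj_mx x ys *m w = 0 -> w = 0.
Proof.
move=> Hpt w /matrixP Hw.
have Hr r : w r 0 = w ord0 0.
  have [->//|rn0] := eqVneq r ord0.
  have := Hw r 0; rewrite !mxE.
  under eq_bigr => c _ do rewrite (proj_mx_erow Hpt) (negbTE rn0) mulrBl.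
  by rewrite sumrB !sum_delta => /eqP; rewrite subr_eq0 => /eqP.
have := Hw ord0 0; rewrite !mxE.
under eq_bigr => c _ do rewrite (proj_mx_erow Hpt) eqxx mul1r Hr.
rewrite sumr_const card_ord => /eqP; rewrite mulrn_eq0 /= => /eqP w0.
by apply/matrixP => r j; rewrite (ord1 j) Hr w0 mxE.
Qed.

(* The barycentre of an orthonormal family is the projection of the origin. *)
Lemma proj_mx_erow_sol (F : fieldType) (x : I -> F) :
  (forall r, point x (ys r) = erow F r) -> (m.+1%:R : F) != 0 ->
  proj_mx x ys *m const_mx (m.+1%:R^-1) = \col_r (r == ord0)%:R.
Proof.
move=> Hpt Hm; apply/matrixP => r j; rewrite !mxE.
under eq_bigr => c _ do rewrite (proj_mx_erow Hpt) mxE.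
case: (r == ord0) => /=.
  by rewrite sumr_const card_ord -[_ *+ _]mulr_natl mul1r mulfV.
under eq_bigr => c _ do rewrite mulrBl.
by rewrite sumrB !sum_delta subrr.
Qed.

Definition basis_config : I -> rat :=
  fun xi => if [pick r | ys r == xi.1] is Some r then ((xi.2 : nat) == r)%:R else 0.

Lemma point_basis_config (R : realType) : injective ys ->
  forall r, point (fun i => ratr (basis_config i) : R) (ys r) = erow R r.
Proof.
move=> inj r; apply/rowP => i; rewrite !mxE /basis_config /=.
case: pickP => [r' /eqP/inj -> | /(_ r)]; first by rewrite ratr_nat.
by rewrite eqxx.
Qed.

Lemma proj_cof_neq0 (R : realType) (p : V -> 'rV[R]_d) j :
  generic p -> injective ys -> proj_cof (coords p) ys j != 0.
Proof.
move=> Hg inj.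
apply: (@alg_indep_neq0 R (coords p) (fun Rg x => proj_cof x ys j) basis_config)
  => [R1 R2 f y|//|]; first exact: map_proj_cof.
have Hpt := point_basis_config R inj.
have Hm1 : (m.+1%:R : R) != 0 by rewrite pnatr_eq0.
have := det_mul_sol_adj (proj_mx_erow_sol Hpt Hm1) j; rewrite mxE => Hd.
rewrite /= /proj_cof -Hd mulf_neq0 ?invr_eq0 //.
by apply: det_neq0_ker0; apply: proj_mx_erow_ker0.
Qed.

End BasisConfiguration.

Lemma proj_coeff_neq0 (R : realType) (p : V -> 'rV[R]_d) (D : {set V}) (a : V -> R) u :
  (#|D| <= d)%N -> generic p -> is_proj_coeffs p D a -> u \in D -> a u != 0.
Proof.
move=> Dd Hg Hpr uD; have D0 : (0 < #|D|)%N by apply/card_gt0P; exists u.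
move: Dd; rewrite -(prednK D0) => Dd.
have [inj Hm [j uj] Hs] := enum_set_ord (esym (prednK D0)) uD.
have := det_mul_sol_adj (proj_coeffs_sol Hpr Hm (Hs R)) j; rewrite mxE uj => Hd.
by apply: contraNneq (@proj_cof_neq0 _ _ Dd R p j Hg inj) => a0; rewrite /proj_cof -Hd a0 mulr0.
Qed.

Lemma proj_mx_gram_sol (Rg : comNzRingType) (x : I -> Rg) m (ys : 'I_m.+1 -> V)
    (a : 'cV_m.+1) (g : Rg) :
  \sum_r a r 0 = 1 ->
  (forall r, \sum_c a c 0 * gdotp (point x (ys c)) (point x (ys r)) = g) ->
  proj_mx x ys *m a = \col_r (r == ord0)%:R.
Proof.
move=> H1 Hg; apply/matrixP => r j; rewrite !mxE (ord1 j).
under eq_bigr => c _ do rewrite mxE.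
case: (r == ord0) => /=; first by under eq_bigr => c _ do rewrite mul1r.
under eq_bigr => c _ do rewrite gdotpB mulrBl [_ * a c 0]mulrC [_ * a c 0]mulrC.
by rewrite sumrB !Hg subrr.
Qed.

(* As the coefficients sum to 0, [P] lies in the direction space of the
   points, to which the other equations make it orthogonal; so [P = 0]. *)
Lemma proj_mx_ker0 (R : realType) (x : I -> R) m (ys : 'I_m.+1 -> V) :
  (forall w : 'I_m.+1 -> R, \sum_r w r = 0 -> \sum_r w r *: point x (ys r) = 0 ->
     forall r, w r = 0) ->
  forall w : 'cV_m.+1, proj_mx x ys *m w = 0 -> w = 0.
Proof.
move=> Hai w /matrixP Hw.
have S0 : \sum_r w r 0 = 0.
  transitivity ((proj_mx x ys *m w) ord0 0); last by rewrite Hw mxE.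
  by rewrite mxE; apply: eq_bigr => c _; rewrite mxE eqxx mul1r.
set P := \sum_r w r 0 *: point x (ys r).
have Ho r : gdotp P (point x (ys r) - point x (ys ord0)) = 0.
  have [->|rn0] := eqVneq r ord0; first by rewrite subrr gdotpr0.
  transitivity ((proj_mx x ys *m w) r 0); last by rewrite Hw mxE.
  by rewrite /P gdotp_suml mxE; apply: eq_bigr => c _; rewrite mxE (negbTE rn0) mulrC.
have HP : P = \sum_r w r 0 *: (point x (ys r) - point x (ys ord0)).
  under [RHS]eq_bigr => r _ do rewrite scalerBr.
  by rewrite sumrB -scaler_suml S0 scale0r subr0.
have PP : gdotp P P = 0.
  by rewrite {2}HP gdotpC gdotp_suml big1 // => r _; rewrite gdotpC Ho mulr0.
have P0 : P = 0.
  apply/rowP => i; rewrite mxE.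
  have /eqP : P 0 i * P 0 i = 0.
    apply: (@psumr_eq0P R _ predT (fun i => P 0 i * P 0 i)) => // j _.
    by rewrite -expr2 sqr_ge0.
  by rewrite mulf_eq0 orbb => /eqP.
have Hz := Hai (fun r => w r 0) S0 P0.
by apply/matrixP => r j; rewrite (ord1 j) Hz mxE.
Qed.

Lemma ord_maxVwiden m (t : 'I_m.+2) :
  t = ord_max \/ exists t' : 'I_m.+1, t = widen_ord (leqnSn _) t'.
Proof.
have := ltn_ord t; rewrite ltnS leq_eqVlt => /orP [/eqP H | H].
  by left; apply/val_inj.
by right; exists (Ordinal H); apply/val_inj.
Qed.

Lemma widen_neq_max m (t : 'I_m.+1) :
  (widen_ord (leqnSn _) t == ord_max :> 'I_m.+2) = false.
Proof. by apply/negbTE; rewrite -val_eqE /= neq_ltn ltn_ord. Qed.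

Lemma widen_ord_eq m (t s : 'I_m.+1) :
  (widen_ord (leqnSn _) t == widen_ord (leqnSn _) s :> 'I_m.+2) = (t == s).
Proof. by rewrite -val_eqE. Qed.

Lemma sum_lift (M : zmodType) n (s : 'I_n.+1) (F : 'I_n.+1 -> M) :
  F s = 0 -> \sum_t F t = \sum_(r < n) F (lift s r).
Proof. by move=> Fs; rewrite (bigD1_ord s) //= Fs add0r. Qed.

Lemma sum_if_eq0 (Rg : nzRingType) n (s : 'I_n) (F : 'I_n -> Rg) :
  \sum_t (if t == s then 0 else F t) = \sum_t F t - F s.
Proof.
have H t : (if t == s then 0 else F t) = F t - (t == s)%:R * F t.
  by case: eqP => _; rewrite ?mul1r ?subrr ?mul0r ?subr0.
by under eq_bigr => t _ do rewrite H; rewrite sumrB sum_delta.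
Qed.

Lemma sum_delta_nat (Rg : nzRingType) n (r : 'I_n) (F : 'I_n -> Rg) :
  \sum_(c < n) ((r : nat) == (c : nat))%:R * F c = F r.
Proof. by under eq_bigr => c _ do rewrite val_eqE eq_sym; exact: sum_delta. Qed.

Lemma if_mul0r (Rg : nzRingType) (b : bool) (x y : Rg) :
  (if b then 0 else x) * y = if b then 0 else x * y.
Proof. by case: b; rewrite ?mul0r. Qed.

Definition neg_sum_row (Rg : nzRingType) m : 'rV[Rg]_d :=
  \row_i (if ((i : nat) < m.+1)%N then -1 else 0).

Definition simplex_pt (Rg : nzRingType) m (t : 'I_m.+2) : 'rV[Rg]_d :=
  if t == ord_max then neg_sum_row Rg m else erow Rg t.

Lemma simplex_pt_max (Rg : nzRingType) m :
  simplex_pt Rg (ord_max : 'I_m.+2) = neg_sum_row Rg m.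
Proof. by rewrite /simplex_pt eqxx. Qed.

Lemma simplex_pt_widen (Rg : nzRingType) m (t : 'I_m.+1) :
  simplex_pt Rg (widen_ord (leqnSn _) t) = erow Rg t.
Proof. by rewrite /simplex_pt widen_neq_max. Qed.

Lemma gdotp_erow_neg_sum (Rg : nzRingType) m (a : nat) : (a < m.+1)%N -> (m.+1 <= d)%N ->
  gdotp (erow Rg a) (neg_sum_row Rg m) = -1.
Proof.
move=> am md; have ad : (a < d)%N by apply: leq_trans am md.
rewrite /gdotp (bigD1 (Ordinal ad)) //= big1 => [|i Hi].
  by rewrite !mxE /= eqxx am mul1r addr0.
rewrite !mxE; have -> : ((i : nat) == a) = false.
  by apply/negbTE; apply: contra Hi => /eqP Hia; apply/eqP/val_inj.
by rewrite mul0r.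
Qed.

Lemma gdotp_neg_sum (Rg : nzRingType) m : (m.+1 <= d)%N ->
  gdotp (neg_sum_row Rg m) (neg_sum_row Rg m) = m.+1%:R.
Proof.
move=> md; rewrite /gdotp.
have -> : \sum_(i < d) neg_sum_row Rg m 0 i * neg_sum_row Rg m 0 i
    = \sum_(i < d) (if ((i : nat) < m.+1)%N then 1 else 0).
  by apply: eq_bigr => i _; rewrite !mxE; case: ifP; rewrite ?mulrNN ?mulr1 ?mulr0.
by rewrite -big_mkcond /= -(big_ord_widen _ (fun _ => 1) md) sumr_const card_ord.
Qed.

Definition simplex_den (R : realType) m : R := (m.+1 * m.+1 + m)%:R.

Lemma simplex_den_neq0 (R : realType) m : simplex_den R m != 0.
Proof. by rewrite /simplex_den pnatr_eq0 addn_eq0 muln_eq0. Qed.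

(* [simplex_coef s] are the projection coefficients of the facet opposite to
   vertex [s] of the simplex, and [simplex_gram s] the common value of the
   inner products of their projection point with the facet's vertices. *)
Definition simplex_coef (R : realType) m (s t : 'I_m.+2) : R :=
  if t == s then 0 else if s == ord_max then m.+1%:R^-1
  else if t == ord_max then m.+1%:R / simplex_den R m else m.+2%:R / simplex_den R m.

Definition simplex_gram (R : realType) m (s : 'I_m.+2) : R :=
  if s == ord_max then m.+1%:R^-1 else (simplex_den R m)^-1.

Lemma simplex_coef_max_widen (R : realType) m (t : 'I_m.+1) :
  simplex_coef R ord_max (widen_ord (leqnSn _) t) = m.+1%:R^-1.
Proof. by rewrite /simplex_coef widen_neq_max eqxx. Qed.

Lemma simplex_coef_widen (R : realType) m (s t : 'I_m.+1) :
  simplex_coef R (widen_ord (leqnSn _) s) (widen_ord (leqnSn _) t) =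
  if t == s then 0 else m.+2%:R / simplex_den R m.
Proof. by rewrite /simplex_coef widen_ord_eq !widen_neq_max. Qed.

Lemma simplex_coef_widen_max (R : realType) m (s : 'I_m.+1) :
  simplex_coef R (widen_ord (leqnSn _) s) ord_max = m.+1%:R / simplex_den R m.
Proof. by rewrite /simplex_coef [ord_max == _]eq_sym widen_neq_max eqxx. Qed.

Lemma simplex_coef_diag (R : realType) m (s : 'I_m.+2) : simplex_coef R s s = 0.
Proof. by rewrite /simplex_coef eqxx. Qed.

Lemma sum_simplex_coef (R : realType) m (s : 'I_m.+2) : \sum_t simplex_coef R s t = 1.
Proof.
have Hk : (m.+1%:R : R) != 0 by rewrite pnatr_eq0.
have := simplex_den_neq0 R m; rewrite /simplex_den natrD natrM !mulrS => HD.
rewrite big_ord_recr /=.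
have [->|[s' ->]] := ord_maxVwiden s.
  under eq_bigr => t _ do rewrite simplex_coef_max_widen.
  by rewrite simplex_coef_diag addr0 sumr_const card_ord -[_ *+ _]mulr_natl mulfV.
under eq_bigr => t _ do rewrite simplex_coef_widen.
rewrite sum_if_eq0 simplex_coef_widen_max sumr_const card_ord -[_ *+ _]mulr_natl.
by rewrite /simplex_den natrD natrM !mulrS; field.
Qed.

Section SimplexGram.
Variables (R : realType) (m : nat).
Hypothesis md : (m.+1 <= d)%N.
Local Notation wd := (widen_ord (leqnSn m.+1)).
Local Notation q := (simplex_pt R (m:=m)).

Lemma gdotp_simplex_widen (a b : 'I_m.+1) : gdotp (q (wd a)) (q (wd b)) = (a == b)%:R.
Proof. by rewrite !simplex_pt_widen gdotp_erow //; apply: leq_trans (ltn_ord a) md. Qed.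

Lemma gdotp_simplex_widen_max (a : 'I_m.+1) : gdotp (q (wd a)) (q ord_max) = -1.
Proof. by rewrite simplex_pt_widen simplex_pt_max gdotp_erow_neg_sum. Qed.

Lemma gdotp_simplex_max_widen (a : 'I_m.+1) : gdotp (q ord_max) (q (wd a)) = -1.
Proof. by rewrite gdotpC gdotp_simplex_widen_max. Qed.

Lemma gdotp_simplex_max : gdotp (q ord_max) (q ord_max) = m.+1%:R.
Proof. by rewrite simplex_pt_max gdotp_neg_sum. Qed.

Lemma simplex_coef_gram (s u : 'I_m.+2) : u != s ->
  \sum_t simplex_coef R s t * gdotp (q t) (q u) = simplex_gram R s.
Proof.
move=> us.
have Hk : (m.+1%:R : R) != 0 by rewrite pnatr_eq0.
have := simplex_den_neq0 R m; rewrite /simplex_den natrD natrM !mulrS => HD.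
rewrite big_ord_recr /=.
have [Es|[s' Es]] := ord_maxVwiden s; rewrite Es in us *.
  have [Eu|[u' ->]] := ord_maxVwiden u; first by rewrite Eu eqxx in us.
  under eq_bigr => t _ do rewrite simplex_coef_max_widen gdotp_simplex_widen mulrC.
  by rewrite sum_delta simplex_coef_diag mul0r addr0 /simplex_gram eqxx.
rewrite /simplex_gram widen_neq_max.
have [->|[u' Eu]] := ord_maxVwiden u.
  under eq_bigr => t _ do rewrite simplex_coef_widen gdotp_simplex_widen_max if_mul0r.
  rewrite sum_if_eq0 simplex_coef_widen_max gdotp_simplex_max sumr_const card_ord.
  by rewrite -[_ *+ _]mulr_natl /simplex_den natrD natrM !mulrS; field.
rewrite Eu widen_ord_eq in us *.
under eq_bigr => t _ do rewrite simplex_coef_widen gdotp_simplex_widen mulrC.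
rewrite sum_delta (negbTE us) simplex_coef_widen_max gdotp_simplex_max_widen.
by rewrite /simplex_den natrD natrM !mulrS; field.
Qed.

End SimplexGram.

(* Row [s] holds the cofactors of the facet opposite to vertex [s]; it is
   [det L_s] times the equation of that facet. *)
Definition clique_mx (Rg : comNzRingType) (x : I -> Rg) m (zs : 'I_m.+2 -> V) : 'M[Rg]_m.+2 :=
  \matrix_(s, t) if unlift s t is Some r then proj_cof x (zs \o lift s) r else 0.

Lemma map_clique_mx (R1 R2 : comNzRingType) (f : {rmorphism R1 -> R2}) x m
    (zs : 'I_m.+2 -> V) :
  map_mx f (clique_mx x zs) = clique_mx (f \o x) zs.
Proof.
apply/matrixP => s t; rewrite !mxE; case: (unlift s t) => [r|]; last exact: rmorph0.
exact: map_proj_cof.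
Qed.

Definition simplex_config m (zs : 'I_m.+2 -> V) : I -> rat :=
  fun xi => if [pick t | zs t == xi.1] is Some t then simplex_pt rat t 0 xi.2 else 0.

Lemma point_simplex_config (R : realType) m (zs : 'I_m.+2 -> V) : injective zs ->
  forall t, point (fun i => ratr (simplex_config zs i) : R) (zs t) = simplex_pt R t.
Proof.
move=> inj t; apply/rowP => i; rewrite !mxE /simplex_config /=.
case: pickP => [t' /eqP/inj -> | /(_ t)]; last by rewrite eqxx.
rewrite /simplex_pt; case: (t == ord_max); rewrite !mxE; last by rewrite ratr_nat.
by case: ifP => _; rewrite ?rmorphN1 ?rmorph0.
Qed.

Section SimplexConfiguration.
Variables (R : realType) (m : nat) (zs : 'I_m.+2 -> V) (x : I -> R).
Hypothesis md : (m.+1 <= d)%N.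
Hypothesis Hpt : forall t, point x (zs t) = simplex_pt R t.
Local Notation wd := (widen_ord (leqnSn m.+1)).

Lemma facet_simplex_sol (s : 'I_m.+2) :
  proj_mx x (zs \o lift s) *m \col_r simplex_coef R s (lift s r) = \col_r (r == ord0)%:R.
Proof.
apply: (proj_mx_gram_sol (g := simplex_gram R s)).
  under eq_bigr => r _ do rewrite mxE.
  by rewrite -(sum_lift (F := simplex_coef R s)) ?simplex_coef_diag // sum_simplex_coef.
move=> r; under eq_bigr => c _ do rewrite mxE /= !Hpt.
rewrite -(sum_lift (F := fun t => simplex_coef R s t * gdotp (simplex_pt R t)
                                   (simplex_pt R (lift s r)))) /=.
  by apply: simplex_coef_gram => //; rewrite eq_sym neq_lift.
by rewrite simplex_coef_diag mul0r.
Qed.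

(* Any m+1 vertices of the simplex are affinely independent. *)
Lemma facet_simplex_ker0 (s : 'I_m.+2) (w : 'cV_m.+1) :
  proj_mx x (zs \o lift s) *m w = 0 -> w = 0.
Proof.
apply: proj_mx_ker0 => {}w _ Hw.
pose W t := if unlift s t is Some r then w r else 0.
have HW : \sum_t W t *: simplex_pt R t = 0.
  rewrite (sum_lift (s := s) (F := fun t => W t *: simplex_pt R t)) /W ?unlift_none ?scale0r //.
  transitivity (\sum_r w r *: point x ((zs \o lift s) r)); last exact: Hw.
  by apply: eq_bigr => r _; rewrite liftK /= Hpt.
have coordW (i : 'I_m.+1) : W (wd i) = W ord_max.
  have id : (i < d)%N by apply: leq_trans (ltn_ord i) md.
  have := congr1 (fun M : 'rV_d => M 0 (Ordinal id)) HW; rewrite summxE mxE big_ord_recr /=.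
  under eq_bigr => t _ do rewrite mxE simplex_pt_widen mxE /= mulrC.
  rewrite sum_delta_nat mxE simplex_pt_max mxE /= ltn_ord => /eqP.
  by rewrite mulrN1 subr_eq0 => /eqP.
have Wmax : W ord_max = 0.
  have [Es|[s' Es]] := ord_maxVwiden s; first by rewrite /W -Es unlift_none.
  by rewrite -(coordW s') /W -Es unlift_none.
have W0 t : W t = 0 by have [->|[t' ->]] := ord_maxVwiden t; rewrite ?coordW Wmax.
by move=> r; have := W0 (lift s r); rewrite /W liftK.
Qed.

Lemma clique_mx_simplex_ker (u : 'cV_m.+2) (s : 'I_m.+2) :
  clique_mx x zs *m u = 0 -> \sum_t simplex_coef R s t * u t 0 = 0.
Proof.
move=> Hu.
have HL : \det (proj_mx x (zs \o lift s)) != 0.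
  by apply: det_neq0_ker0; apply: facet_simplex_ker0.
have Hcof r : proj_cof x (zs \o lift s) r
              = \det (proj_mx x (zs \o lift s)) * simplex_coef R s (lift s r).
  by rewrite /proj_cof -(det_mul_sol_adj (@facet_simplex_sol s) r) mxE.
have := congr1 (fun M : 'M_(m.+2,1) => M s 0) Hu; rewrite !mxE.
rewrite (sum_lift (s := s)); last by rewrite mxE unlift_none mul0r.
under eq_bigr => r _ do rewrite mxE liftK Hcof -mulrA.
rewrite -mulr_sumr => /eqP; rewrite mulf_eq0 (negbTE HL) /= => /eqP.
by rewrite (sum_lift (s := s)) ?simplex_coef_diag ?mul0r.
Qed.

(* The facet opposite to the last vertex gives sum_t u(e_t) = 0, then the
   facet opposite to e_s gives (m+1) u(last) = (m+2) u(e_s). *)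
Lemma clique_mx_simplex_det : \det (clique_mx x zs) != 0.
Proof.
apply: det_neq0_ker0 => u Hu.
have Hk : (m.+1%:R : R) != 0 by rewrite pnatr_eq0.
have Hk2 : (m.+2%:R : R) != 0 by rewrite pnatr_eq0.
have HD := simplex_den_neq0 R m.
have E s := clique_mx_simplex_ker s Hu.
have S : \sum_t u (wd t) 0 = 0.
  have := E ord_max; rewrite big_ord_recr /= simplex_coef_diag mul0r addr0.
  under eq_bigr => t _ do rewrite simplex_coef_max_widen.
  by rewrite -mulr_sumr => /eqP; rewrite mulf_eq0 invr_eq0 (negbTE Hk) /= => /eqP.
have H2 s : m.+1%:R * u ord_max 0 = m.+2%:R * u (wd s) 0.
  have := E (wd s); rewrite big_ord_recr /=.
  under eq_bigr => t _ do rewrite simplex_coef_widen if_mul0r.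
  rewrite sum_if_eq0 -mulr_sumr S mulr0 sub0r simplex_coef_widen_max addrC => /eqP.
  rewrite subr_eq0 => /eqP.
  by rewrite -!mulrA !(mulrCA _ (simplex_den R m)^-1) => /(mulfI (invr_neq0 HD)).
have umax : u ord_max 0 = 0.
  have : \sum_t m.+2%:R * u (wd t) 0 = 0 by rewrite -mulr_sumr S mulr0.
  under eq_bigr => t _ do rewrite -H2.
  rewrite sumr_const card_ord => /eqP; rewrite mulrn_eq0 /= mulf_eq0 (negbTE Hk) /=.
  by move/eqP.
apply/matrixP => t j; rewrite (ord1 j) mxE.
have [->|[t' ->]] := ord_maxVwiden t => //.
have /eqP := H2 t'; rewrite umax mulr0 eq_sym mulf_eq0 (negbTE Hk2) /=.
by move/eqP.
Qed.

End SimplexConfiguration.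

Lemma clique_vanish_ord (R : realType) (p : V -> 'rV[R]_d) m (zs : 'I_m.+2 -> V)
    (a : 'I_m.+2 -> V -> R) (W : V -> R) :
  (m.+1 <= d)%N -> generic p -> injective zs ->
  (forall s, is_proj_coeffs p ((zs \o lift s) @: setT) (a s)) ->
  (forall s, \sum_r a s (zs (lift s r)) * W (zs (lift s r)) = 0) ->
  forall t, W (zs t) = 0.
Proof.
move=> md Hg inj Hpr HW t.
have injs s : injective (zs \o lift s) by apply: inj_comp inj (@lift_inj _ s).
have Hd s r : \det (proj_mx (coords p) (zs \o lift s)) * a s (zs (lift s r))
    = proj_cof (coords p) (zs \o lift s) r.
  have Hmem r' : (zs \o lift s) r' \in (zs \o lift s) @: setT by rewrite imset_f.
  by rewrite /proj_cof -(det_mul_sol_adj (proj_coeffs_sol (Hpr s) Hmem (sum_imset_ord (injs s))) r) mxE.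
have Hnz : \det (clique_mx (coords p) zs) != 0.
  apply: (@alg_indep_neq0 R _ (fun Rg x => \det (clique_mx x zs)) (simplex_config zs) _ Hg).
    by move=> R1 R2 f y; rewrite -det_map_mx map_clique_mx.
  by apply: clique_mx_simplex_det => //; apply: point_simplex_config.
have HNw : clique_mx (coords p) zs *m \col_t W (zs t) = 0.
  apply/matrixP => s j; rewrite !mxE (sum_lift (s := s)); last first.
    by rewrite mxE unlift_none mul0r.
  under eq_bigr => r _ do rewrite !mxE liftK -Hd -mulrA.
  by rewrite -mulr_sumr HW mulr0.
have := congr1 (mulmx (\adj (clique_mx (coords p) zs))) HNw.
rewrite mulmxA mul_adj_mx mul_scalar_mx mulmx0 => /matrixP /(_ t 0).
by rewrite !mxE => /eqP; rewrite mulf_eq0 (negbTE Hnz) /= => /eqP.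
Qed.

Lemma clique_vanish (R : realType) (p : V -> 'rV[R]_d) (alpha : {set V} -> V -> R)
    (W : V -> R) (S : {set V}) m :
  #|S| = m.+2 -> (m.+1 <= d)%N -> generic p ->
  (forall T : {set V}, T \subset S -> #|T| = m.+1 ->
     is_proj_coeffs p T (alpha T) /\ \sum_(v in T) alpha T v * W v = 0) ->
  forall v, v \in S -> W v = 0.
Proof.
move=> HS md Hg Hfacet v Sv.
have [injz Sz [j <-] _] := enum_set_ord HS Sv.
set zs := fun r => _ in injz Sz *.
have injs s : injective (zs \o lift s) by apply: inj_comp injz (@lift_inj _ s).
have Hfs s : (zs \o lift s) @: setT \subset S.
  by apply/subsetP => y /imsetP [r _ ->]; apply: Sz.
have Hcard s : #|(zs \o lift s) @: setT| = m.+1.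
  by rewrite card_imset // cardsT card_ord.
apply: (clique_vanish_ord (a := fun s => alpha ((zs \o lift s) @: setT)) md Hg injz).
  by move=> s; case: (Hfacet _ (Hfs s) (Hcard s)).
by move=> s; have [_] := Hfacet _ (Hfs s) (Hcard s); rewrite (sum_imset_ord (injs s)).
Qed.

End Configurations.

Lemma connect_backward (T : finType) (e : rel T) (P : T -> Prop) :
  (forall a b, e a b -> P b -> P a) -> forall a b, connect e a b -> P b -> P a.
Proof.
move=> step a b /connectP [s].
elim: s a => [|c s IH] a /= => [_ -> //|/andP [eac pth] lst Pb].
exact: step eac (IH c pth lst Pb).
Qed.

Lemma rank_hmatrix (R : realType) (V : finType) (E : {set {set V}})
    (alpha : {set V} -> V -> R) :
  (forall D, D \in E -> forall x, x \notin D -> alpha D x = 0) ->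
  (forall W : V -> R, (forall D, D \in E -> \sum_(v in D) alpha D v * W v = 0) ->
     forall v, W v = 0) ->
  \rank (hmatrix E alpha) = #|V|.
Proof.
move=> Hsupp Hker; rewrite -mxrank_tr; apply/eqP; apply/inj_row_free => w Hw.
pose W v := w 0 (enum_rank v).
suff W0 : forall v, W v = 0 by apply/rowP => j; rewrite mxE -(enum_valK j); exact: W0.
apply: Hker => D HD.
transitivity ((w *m (hmatrix E alpha)^T) 0 (enum_rank_in HD D)); last by rewrite Hw mxE.
rewrite mxE big_mkcond /= (reindex (fun j : 'I_#|V| => enum_val j)) /=; last first.
  by apply: onW_bij; apply: enum_val_bij.
apply: eq_bigr => j _; rewrite !mxE enum_rankK_in // /W enum_valK.
by case: ifP => [_|/negbT Dj]; [rewrite mulrC | rewrite Hsupp ?mulr0].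
Qed.

Section Propagation.
Variables (R : realType) (V : finType) (k : nat) (E : {set {set V}}).
Variables (alpha : {set V} -> V -> R) (W : V -> R).
Hypothesis Hunif : k_uniform k E.
Hypothesis Hsupp : forall A u, A \in E -> u \in A -> alpha A u != 0.
Hypothesis HW : forall A, A \in E -> \sum_(v in A) alpha A v * W v = 0.

(* [A] has a single vertex outside [B], and the equation of [A] isolates it. *)
Lemma vanish_hadj A B : hadj k E A B ->
  (forall u, u \in B -> W u = 0) -> forall u, u \in A -> W u = 0.
Proof.
move=> /and3P [HA _ /eqP HAB] WB u uA.
have [//|uNB] := boolP (u \in B); first exact: WB.
have /card_le1_eqP AB1 : (#|A :\: B| <= 1)%N.
  by rewrite cardsD Hunif // HAB leq_subLR addn1 leqSpred.
have := HW HA; rewrite (bigD1 u) //= big1 ?addr0.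
  by move/eqP; rewrite mulf_eq0 (negbTE (Hsupp HA uA)) => /eqP.
move=> y /andP [yA yu]; have [yB|yNB] := boolP (y \in B); first by rewrite WB ?mulr0.
by move: yu; rewrite (AB1 y u) ?eqxx // !inE ?yA ?uA ?yNB ?uNB.
Qed.

Lemma vanish_strongly_conn A B : strongly_conn k E A B ->
  (forall u, u \in B -> W u = 0) -> forall u, u \in A -> W u = 0.
Proof. exact: connect_backward vanish_hadj A B. Qed.

End Propagation.

Theorem lemma3p4 (R : realType) (V : finType) (k : nat) (E : {set {set V}})
  (d : nat) (p : V -> 'rV[R]_d) (alpha : {set V} -> V -> R) :
  k_uniform k E ->
  (forall v : V, exists2 D, D \in E & v \in D) ->
  every_scc_has_clique k E ->
  (k <= d)%N ->
  generic p ->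
  (forall D, D \in E -> gen_pos p D) ->
  (forall D, D \in E -> is_proj_coeffs p D (alpha D)) ->
  \rank (hmatrix E alpha) = #|V|.
Proof.
move=> Hunif Hcov Hcl Hkd Hgen _ Hproj.
apply: rank_hmatrix => [D HD|W HW v]; first by case: (Hproj D HD).
have [D HD Dv] := Hcov v.
case: k Hunif Hcl Hkd => [|m] Hunif Hcl Hkd.
  by move: Dv; rewrite (cards0_eq (Hunif D HD)) in_set0.
have Hsupp A u : A \in E -> u \in A -> alpha A u != 0.
  by move=> HA; apply: proj_coeff_neq0 Hgen (Hproj A HA); rewrite Hunif.
have [S [HS Hsub]] := Hcl D HD.
have WS := clique_vanish HS Hkd Hgen (fun T TS HT =>
  let: conj TE _ := Hsub T TS HT in conj (Hproj T TE) (HW T TE)).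
have [v0 Sv0] : exists v0, v0 \in S by apply/card_gt0P; rewrite HS.
have HT : #|S :\ v0| = m.+1 by apply: succn_inj; rewrite -HS [#|S|](cardsD1 v0) Sv0.
have [_ DT] := Hsub _ (subD1set S v0) HT.
apply: (vanish_strongly_conn Hunif Hsupp HW DT) Dv => u /setD1P [_]; exact: WS.
Qed.
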